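(* For $n \in \mathbb{N}_0$ let $\kappa(n)$ denote the maximal number of consecutive $1$s in the binary expansion of $n$ (so $\kappa(0)=0$, and e.g. $\kappa(1234)=\kappa([10011010010]_2)=2$). Define $f\colon\mathbb{N}_0\to\{0,1\}$ by $f(n)=1$ if $\kappa(n)$ is odd and $f(n)=0$ otherwise. Then $f$ is asymptotically $2$-automatic but there is no $2$-automatic sequence $\tilde f\colon\mathbb{N}_0\to\{0,1\}$ with $f\simeq\tilde f$.
   Context: $\mathbb{N}_0=\{0,1,2,\dots\}$. A property holds for almost all $n\in\mathbb{N}_0$ if the set of $n$ where it fails has upper density $\limsup_{N\to\infty}|\cdot\cap\{0,\dots,N-1\}|/N$ equal to $0$. Sequences $f,g$ are asymptotically equal, $f\simeq g$, if $f(n)=g(n)$ for almost all $n$. The $k$-kernel of $f$ is $\mathcal{N}_k(f) = \{ n \mapsto f(k^\alpha n + r) : \alpha, r \in \mathbb{N}_0,\ r < k^\alpha\}$; $f$ is $k$-automatic if $\mathcal{N}_k(f)$ is finite, and asymptotically $k$-automatic if $\mathcal{N}_k(f)/{\simeq}$ is finite. *)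

From mathcomp Require Import all_boot.
Set Implicit Arguments. Unset Strict Implicit. Unset Printing Implicit Defensive.

Definition count_below (P : pred nat) (N : nat) : nat := count P (iota 0 N).

(* The set {n | P n} has upper density 0:
   limsup_{N->oo} |{n < N | P n}| / N = 0, i.e. for every k > 0 we have
   |{n < N | P n}| / N <= 1/k for all sufficiently large N. *)
Definition upper_density_zero (P : pred nat) : Prop :=
  forall k : nat, 0 < k -> exists N0 : nat, forall N : nat, N0 <= N ->
    k * count_below P N <= N.

Definition almost_all (P : pred nat) : Prop :=
  upper_density_zero (fun n => ~~ P n).

Definition asym_eq (T : eqType) (f g : nat -> T) : Prop :=
  almost_all (fun n => f n == g n).

Definition kernel_elt (T : Type) (k : nat) (f : nat -> T) (a r : nat) : nat -> T :=
  fun n => f (k ^ a * n + r).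

Definition automatic (T : Type) (k : nat) (f : nat -> T) : Prop :=
  exists (m : nat) (g : nat -> nat -> T),
    forall a r : nat, r < k ^ a ->
      exists i : nat, i < m /\ forall n, kernel_elt k f a r n = g i n.

Definition asym_automatic (T : eqType) (k : nat) (f : nat -> T) : Prop :=
  exists (m : nat) (g : nat -> nat -> T),
    forall a r : nat, r < k ^ a ->
      exists i : nat, i < m /\ asym_eq (kernel_elt k f a r) (g i).

(* Binary digits of n, least significant first (no leading zeros; [::] for 0). *)
Fixpoint binary_digits_aux (fuel n : nat) : seq bool :=
  match fuel with
  | 0 => [::]
  | fuel'.+1 => if n == 0 then [::] else odd n :: binary_digits_aux fuel' n./2
  end.
Definition binary_digits (n : nat) : seq bool := binary_digits_aux n n.

(* (length of the run of trues at the head, longest run of trues) *)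
Fixpoint runs (s : seq bool) : nat * nat :=
  match s with
  | [::] => (0, 0)
  | b :: t => let: (c, m) := runs t in
              let c' := if b then c.+1 else 0 in (c', maxn m c')
  end.

Definition kappa (n : nat) : nat := (runs (binary_digits n)).2.

Definition f_kappa (n : nat) : nat := if odd (kappa n) then 1 else 0.

Lemma kappa_examples : [:: kappa 0; kappa 1234; kappa 7; kappa 0x1D] = [:: 0; 2; 3; 3].
Proof. by vm_compute. Qed.

From mathcomp Require Import all_boot zify.
From Stdlib Require Import ClassicalEpsilon.
Set Implicit Arguments. Unset Strict Implicit. Unset Printing Implicit Defensive.

(* Writing 2^a n + r in binary puts the a digits of r below those of n, so the
   longest run of ones can only grow where the lowest run of ones of n meets r.
   For almost all n that run is short while kappa n is large, hence
   f (2^a n + r) = f n for almost all n: every kernel sequence of f is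
   asymptotically f itself.
   If a 2-automatic ft were asymptotically equal to f, each of its finitely many
   kernel sequences would be asymptotically f too, so ft (2^(a+1) n + r) = f n
   for a fixed proportion of the n < 2^l, uniformly in a and r. With a 0
   separating r from n, f (2^(a+1) n + r) is the parity of kappa r as soon as
   kappa r > l >= kappa n, and inserting one more 1 into a longest run shows that
   each parity is taken by a fixed proportion of the r < 2^a for suitable large
   a. This gives f and ft a set of disagreements of positive upper density. *)

(* Applied to [binary_digits n], whose head is the least significant digit,
   [head_run] counts the trailing ones of n. *)
Definition head_run (s : seq bool) : nat := (runs s).1.
Definition max_run (s : seq bool) : nat := (runs s).2.

Lemma head_run_cons b s : head_run (b :: s) = if b then (head_run s).+1 else 0.
Proof. by rewrite /head_run /=; case: (runs s). Qed.

Lemma max_run_cons b s : max_run (b :: s) = maxn (max_run s) (head_run (b :: s)).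
Proof. by rewrite head_run_cons /max_run /head_run /=; case: (runs s). Qed.

Lemma head_run_le_max_run s : head_run s <= max_run s.
Proof. by case: s => [|b s] //; rewrite max_run_cons leq_maxr. Qed.

Lemma max_run_le_size s : max_run s <= size s.
Proof.
elim: s => [|b s IH] //; rewrite max_run_cons head_run_cons /= geq_max.
by have := head_run_le_max_run s; case: b; lia.
Qed.

Lemma head_run_catl s1 s2 : head_run s1 <= head_run (s1 ++ s2).
Proof. by elim: s1 => [|[] s1 IH] //=; rewrite !head_run_cons. Qed.

Lemma head_run_cat_leq s1 s2 : head_run (s1 ++ s2) <= size s1 + head_run s2.
Proof. by elim: s1 => [|[] s1 IH] //=; rewrite head_run_cons; lia. Qed.

Lemma head_run_cat_false s1 s2 : head_run (s1 ++ false :: s2) = head_run s1.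
Proof. by elim: s1 => [|b s1 IH]; rewrite /= !head_run_cons ?IH. Qed.

Lemma max_run_catl s1 s2 : max_run s1 <= max_run (s1 ++ s2).
Proof.
elim: s1 => [|b s1 IH] //; rewrite cat_cons !max_run_cons geq_max.
by rewrite (leq_trans IH (leq_maxl _ _)) (leq_trans (head_run_catl _ s2)) ?leq_maxr.
Qed.

Lemma max_run_catr s1 s2 : max_run s2 <= max_run (s1 ++ s2).
Proof.
by elim: s1 => [|b s1 IH] //; rewrite cat_cons max_run_cons (leq_trans IH) ?leq_maxl.
Qed.

Lemma max_run_cat_leq s1 s2 :
  max_run (s1 ++ s2) <= maxn (max_run s2) (size s1 + head_run s2).
Proof.
elim: s1 => [|b s1 IH]; first exact: leq_maxl.
rewrite cat_cons max_run_cons geq_max.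
by have := head_run_cat_leq (b :: s1) s2; move: IH => /=; lia.
Qed.

Lemma max_run_cat_false s1 s2 :
  max_run (s1 ++ false :: s2) = maxn (max_run s1) (max_run s2).
Proof.
elim: s1 => [|b s1 IH]; first by rewrite cat0s max_run_cons head_run_cons maxn0 max0n.
rewrite cat_cons !max_run_cons -cat_cons head_run_cat_false IH.
by rewrite -!maxnA [maxn (max_run s2) _]maxnC.
Qed.

Fixpoint bits (a r : nat) : seq bool :=
  if a is a'.+1 then odd r :: bits a' r./2 else [::].

Fixpoint bits_val (s : seq bool) : nat :=
  if s is b :: s' then b + (bits_val s').*2 else 0.

Lemma size_bits a r : size (bits a r) = a.
Proof. by elim: a r => [|a IH] r //=; rewrite IH. Qed.

Lemma bitsK a r : r < 2 ^ a -> bits_val (bits a r) = r.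
Proof.
elim: a r => [|a IH] r /=; first by case: r.
by rewrite expnS => lt_r; rewrite IH; lia.
Qed.

Lemma bits_valK s : bits (size s) (bits_val s) = s.
Proof.
elim: s => [|b s IH] //=; congr (_ :: _); first by case: b; lia.
by rewrite -[in RHS]IH; congr bits; case: b; lia.
Qed.

Lemma bits_val_lt s : bits_val s < 2 ^ size s.
Proof. by elim: s => [|b s IH] //=; rewrite expnS; case: b => /=; lia. Qed.

Lemma bits_rcons0 a r : r < 2 ^ a -> bits a.+1 r = rcons (bits a r) false.
Proof.
elim: a r => [|a IH] r; first by case: r.
rewrite expnS => lt_r; change (bits a.+2 r) with (odd r :: bits a.+1 r./2).
by rewrite IH //; lia.
Qed.

Lemma binary_digitsE n :
  binary_digits n = if n == 0 then [::] else odd n :: binary_digits n./2.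
Proof.
have aux_eq fuel1 fuel2 m : m <= fuel1 -> m <= fuel2 ->
    binary_digits_aux fuel1 m = binary_digits_aux fuel2 m.
  elim: fuel1 fuel2 m => [|fuel1 IH] [|fuel2] m /=; try by move: m => [].
  by move=> le1 le2; case: eqP => // m_neq0; congr (_ :: _); apply: IH; lia.
rewrite /binary_digits; case: n => [|n] //=.
by congr (_ :: _); apply: aux_eq; lia.
Qed.

Lemma runs_bits_cat a n r : r < 2 ^ a ->
  runs (bits a r ++ binary_digits n) = runs (binary_digits (2 ^ a * n + r)).
Proof.
elim: a r => [|a IH] r; first by case: r => // _; rewrite expn0 mul1n addn0.
rewrite expnS => lt_r; rewrite /= IH; last by lia.
have -> : 2 * 2 ^ a * n + r = odd r + (2 ^ a * n + r./2).*2 by lia.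
rewrite [binary_digits (odd r + _)]binary_digitsE.
case: eqP => [eq0|_]; last by congr (runs (_ :: binary_digits _)); case: (odd r); lia.
by have [-> ->] : odd r = false /\ 2 ^ a * n + r./2 = 0 by move: eq0; case: (odd r); lia.
Qed.

Lemma kappa_bits_cat a n r : r < 2 ^ a ->
  kappa (2 ^ a * n + r) = max_run (bits a r ++ binary_digits n).
Proof. by move=> lt_r; rewrite /kappa /max_run runs_bits_cat. Qed.

Lemma head_run_bits_cat a n r : r < 2 ^ a ->
  head_run (binary_digits (2 ^ a * n + r)) = head_run (bits a r ++ binary_digits n).
Proof. by move=> lt_r; rewrite /head_run runs_bits_cat. Qed.

Lemma max_run_bits a r : r < 2 ^ a -> max_run (bits a r) = kappa r.
Proof.
by move=> lt_r; rewrite -[r in RHS]add0n -[0 in RHS](muln0 (2 ^ a)) kappa_bits_cat ?cats0.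
Qed.

Lemma kappa_bits_val s : kappa (bits_val s) = max_run s.
Proof. by rewrite -(max_run_bits (bits_val_lt s)) bits_valK. Qed.

Lemma kappa_le_log2 l n : n < 2 ^ l -> kappa n <= l.
Proof. by move=> lt_n; rewrite -(max_run_bits lt_n) -{2}(size_bits l n) max_run_le_size. Qed.

Lemma kappa_add_sep a n r : r < 2 ^ a ->
  kappa (2 ^ a.+1 * n + r) = maxn (kappa r) (kappa n).
Proof.
move=> lt_r; have lt_r' : r < 2 ^ a.+1 by rewrite expnS; lia.
by rewrite kappa_bits_cat // bits_rcons0 // cat_rcons max_run_cat_false max_run_bits.
Qed.

Lemma kappa_leq_addl a n r : r < 2 ^ a -> kappa n <= kappa (2 ^ a * n + r).
Proof. by move=> lt_r; rewrite kappa_bits_cat // max_run_catr. Qed.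

Lemma kappa_leq_addr a n r : r < 2 ^ a -> kappa r <= kappa (2 ^ a * n + r).
Proof. by move=> lt_r; rewrite kappa_bits_cat // -(max_run_bits lt_r) max_run_catl. Qed.

Lemma kappa_add_leq a n r : r < 2 ^ a ->
  kappa (2 ^ a * n + r) <= maxn (kappa n) (a + head_run (binary_digits n)).
Proof. by move=> lt_r; rewrite kappa_bits_cat // -{2}(size_bits a r) max_run_cat_leq. Qed.

Lemma head_run_ones L : head_run (bits L (2 ^ L - 1)) = L.
Proof.
elim: L => [|L IH] //; have := expn_gt0 2 L; rewrite expnS => pos.
change (bits L.+1 _) with (odd (2 * 2 ^ L - 1) :: bits L (2 * 2 ^ L - 1)./2).
have [-> ->] : odd (2 * 2 ^ L - 1) = true /\ (2 * 2 ^ L - 1)./2 = 2 ^ L - 1 by lia.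
by rewrite head_run_cons IH.
Qed.

Lemma head_run_bits_cat_ones T r s :
  r < 2 ^ T -> T <= head_run (bits T r ++ s) -> r = 2 ^ T - 1.
Proof.
elim: T r => [|T IH] r; first by case: r.
rewrite expnS => lt_r; change (bits T.+1 r) with (odd r :: bits T r./2).
rewrite cat_cons head_run_cons; case: (boolP (odd r)) => // odd_r.
have lt_r2 : r./2 < 2 ^ T by lia.
by rewrite ltnS => /(IH _ lt_r2); lia.
Qed.

Lemma sub_in_count (T : eqType) (P Q : pred T) s :
  {in s, forall x, P x -> Q x} -> count P s <= count Q s.
Proof.
move=> sPQ; rewrite -(@eq_in_count _ (predI P Q)) ?sub_count // => [x /andP[] //|x /sPQ].
by rewrite /=; case: (P x) => // ->.
Qed.

Lemma uniq_leq_count (T : eqType) (P : pred T) s1 s2 :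
  uniq s1 -> {subset s1 <= s2} -> count P s1 <= count P s2.
Proof.
move=> uniq_s1 sub12; rewrite -!size_filter uniq_leq_size ?filter_uniq // => x.
by rewrite !mem_filter => /andP[-> /sub12].
Qed.

Lemma leq_count_below (P : pred nat) M N : M <= N -> count_below P M <= count_below P N.
Proof. by move=> leMN; rewrite /count_below -(subnKC leMN) iotaD count_cat leq_addr. Qed.

Lemma count_below_sum (P : pred nat) N : count_below P N = \sum_(n < N) P n.
Proof.
elim: N => [|N IH]; first by rewrite big_ord0.
by rewrite big_ord_recr -IH /count_below -[in iota _ _]addn1 iotaD count_cat /= addn0.
Qed.

Lemma count_below_mul (P : pred nat) A B :
  count_below P (A * B) = \sum_(n < B) count_below (fun r => P (A * n + r)) A.
Proof.
elim: B => [|B IH]; first by rewrite muln0 big_ord0.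
rewrite big_ord_recr /= -IH /count_below mulnS addnC iotaD count_cat add0n.
by rewrite -[in iota (A * B) _](addn0 (A * B)) iotaDl count_map.
Qed.

(* The upper density of P is at most 1/k; [upper_density_zero P] unfolds to
   [forall k, 0 < k -> density_le_inv P k]. *)
Definition density_le_inv (P : pred nat) (k : nat) : Prop :=
  exists N0, forall N, N0 <= N -> k * count_below P N <= N.

Lemma density_le_inv_sub (P Q : pred nat) k :
  (forall n, P n -> Q n) -> density_le_inv Q k -> density_le_inv P k.
Proof.
move=> sPQ [N0 dQ]; exists N0 => N /dQ; apply: leq_trans.
by rewrite leq_mul2l sub_count ?orbT.
Qed.

Lemma density_le_inv_or (P Q : pred nat) k :
  density_le_inv P k.*2 -> density_le_inv Q k.*2 ->
  density_le_inv (fun n => P n || Q n) k.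
Proof.
move=> [N1 dP] [N2 dQ]; exists (maxn N1 N2) => N; rewrite geq_max => /andP[/dP + /dQ].
have : count_below (fun n => P n || Q n) N <= count_below P N + count_below Q N.
  by rewrite /count_below -count_predUI leq_addr.
nia.
Qed.

Lemma density_le_inv_blocks (P : pred nat) k B D : 0 < B -> 2 * k * D <= B ->
  (forall M, count_below P (B * M) <= D * M) -> density_le_inv P k.
Proof.
move=> B_gt0 kD_le_B cP; exists (2 * k * D) => N le_N.
have : count_below P N <= D * (N %/ B).+1.
  apply: leq_trans (cP _); apply: leq_count_below.
  by rewrite mulnS {1}(divn_eq N B) addnC mulnC leq_add2r ltnW // ltn_pmod.
have := leq_mul kD_le_B (leqnn (N %/ B)); have := leq_divM N B; nia.
Qed.

Lemma upper_density_zero_sub (P Q : pred nat) :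
  (forall n, P n -> Q n) -> upper_density_zero Q -> upper_density_zero P.
Proof. by move=> sPQ dQ k /dQ; apply: density_le_inv_sub. Qed.

Lemma upper_density_zero_or (P Q : pred nat) :
  upper_density_zero P -> upper_density_zero Q ->
  upper_density_zero (fun n => P n || Q n).
Proof. by move=> dP dQ k k_gt0; apply: density_le_inv_or; [apply: dP | apply: dQ]; lia. Qed.

Lemma upper_density_zero_has (T : eqType) (P : T -> pred nat) (s : seq T) :
  {in s, forall i, upper_density_zero (P i)} ->
  upper_density_zero (fun n => has (P^~ n) s).
Proof.
elim: s => [|i s IH] dP /=.
  by move=> k _; exists 0 => N _; rewrite /count_below count_pred0 muln0.
apply: upper_density_zero_or; first by apply: dP; rewrite mem_head.
by apply: IH => j js; apply: dP; rewrite inE js orbT.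
Qed.

Lemma upper_density_zero_affine (P : pred nat) A r : 0 < A ->
  upper_density_zero P -> upper_density_zero (fun n => P (A * n + r)).
Proof.
move=> A_gt0 dP k k_gt0; have [N0 dPN] := dP (k * A.+1) ltac:(nia).
exists (N0 + r) => N le_N; have := dPN (A * N + r) ltac:(nia).
suff /(leq_mul (leqnn (k * A.+1))) :
    count_below (fun n => P (A * n + r)) N <= count_below P (A * N + r) by nia.
rewrite /count_below -(count_map (fun n => A * n + r)) uniq_leq_count //.
  by rewrite map_inj_in_uniq ?iota_uniq // => x y _ _; nia.
by move=> x /mapP[n]; rewrite mem_iota => lt_n ->; rewrite mem_iota; nia.
Qed.

Lemma count_kappa_lt_mul L M :
  count_below (fun n => kappa n < L) (2 ^ L * M) <=
  (2 ^ L - 1) * count_below (fun n => kappa n < L) M.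
Proof.
rewrite count_below_mul count_below_sum big_distrr leq_sum // => n _ /=.
have pos : 0 < 2 ^ L by rewrite expn_gt0.
have [lt_n|ge_n] := ltnP (kappa n) L; last first.
  rewrite muln0 /count_below (@eq_in_count _ _ pred0) ?count_pred0 // => r.
  rewrite mem_iota add0n => lt_r; have := kappa_leq_addl n lt_r.
  by move=> ?; apply/negbTE; rewrite -leqNgt; lia.
rewrite muln1 /count_below -[in iota _ _](subnK pos) iotaD count_cat /=.
(* r = 2^L - 1 puts L ones right below the digits of n. *)
have -> : kappa (2 ^ L * n + (2 ^ L - 1)) < L = false.
  apply/negbTE; rewrite -leqNgt -{1}(head_run_ones L).
  apply: leq_trans (head_run_le_max_run _) _; rewrite max_run_bits ?kappa_leq_addr //; lia.
by rewrite !addn0 (leq_trans (count_size _ _)) ?size_iota.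
Qed.

Lemma count_kappa_lt_exp L t M :
  count_below (fun n => kappa n < L) ((2 ^ L) ^ t * M) <= (2 ^ L - 1) ^ t * M.
Proof.
elim: t M => [|t IH] M.
  by rewrite !expn0 !mul1n (leq_trans (count_size _ _)) ?size_iota.
rewrite !expnS -!mulnA (leq_trans (count_kappa_lt_mul _ _)) // leq_mul2l.
by rewrite IH orbT.
Qed.

Lemma bernoulli_ineq q t : q ^ t * (q + t) <= (q + 1) ^ t * q.
Proof.
elim: t => [|t IH]; first by rewrite !expn0 addn0.
have : q ^ t <= (q + 1) ^ t by case: t {IH} => // t; rewrite leq_exp2r ?leq_addr.
rewrite !expnS; nia.
Qed.

Lemma upper_density_zero_kappa_lt L : upper_density_zero (fun n => kappa n < L).
Proof.
move=> k k_gt0; set q := 2 ^ L - 1; set t := 2 * k * q + 1.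
have eq_q : 2 ^ L = q + 1 by have := expn_gt0 2 L; lia.
apply: (density_le_inv_blocks (B := (2 ^ L) ^ t) (D := q ^ t)).
- by rewrite !expn_gt0.
- have [->|q_gt0] := posnP q; first by rewrite exp0n ?muln0 // /t addn1.
  rewrite eq_q -(leq_pmul2r q_gt0) (leq_trans _ (bernoulli_ineq q t)) //.
  rewrite /t; nia.
- exact: count_kappa_lt_exp.
Qed.

Lemma count_head_run_geq_mul T M :
  count_below (fun n => T <= head_run (binary_digits n)) (2 ^ T * M) <= M.
Proof.
rewrite count_below_mul -[M in _ <= M]card_ord -sum1_card leq_sum // => n _.
apply: leq_trans (_ : count (pred1 (2 ^ T - 1)) (iota 0 (2 ^ T)) <= 1).
  apply: sub_in_count => r; rewrite mem_iota add0n => lt_r /=.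
  by rewrite head_run_bits_cat // => /head_run_bits_cat_ones ->.
by rewrite count_uniq_mem ?iota_uniq ?leq_b1.
Qed.

Lemma asym_eq_kernel_f_kappa a r :
  r < 2 ^ a -> asym_eq (kernel_elt 2 f_kappa a r) f_kappa.
Proof.
move=> lt_r k k_gt0; set T := 4 * k.
apply: (@density_le_inv_sub _
  (fun n => (kappa n < a + T) || (T <= head_run (binary_digits n)))).
  move=> n; apply: contraR; rewrite negb_or -!leqNgt => /andP[ge_kappa lt_head].
  have := kappa_leq_addl n lt_r; have := kappa_add_leq n lt_r.
  by rewrite /kernel_elt /f_kappa => ? ?; have -> : kappa (2 ^ a * n + r) = kappa n by lia.
apply: density_le_inv_or; first by apply: upper_density_zero_kappa_lt; lia.
apply: (density_le_inv_blocks (B := 2 ^ T) (D := 1)).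
- by rewrite expn_gt0.
- by rewrite muln1 -mul2n mulnA ltnW // ltn_expl.
- by move=> M; rewrite mul1n count_head_run_geq_mul.
Qed.

(* When [max_run s = K], [widen_run K s] inserts a 1 into the first longest
   run of s. *)
Fixpoint widen_run (K : nat) (s : seq bool) : seq bool :=
  if s is b :: s' then
    if b && (head_run s == K) then true :: s else b :: widen_run K s'
  else [::].

Fixpoint shrink_run (K : nat) (s : seq bool) : seq bool :=
  if s is b :: s' then
    if b && (head_run s == K) then s' else b :: shrink_run K s'
  else [::].

Section WidenRun.

Variable K : nat.
Hypothesis K_gt0 : 0 < K.

Lemma max_run_cons_leq b s :
  max_run (b :: s) <= K -> max_run s <= K /\ head_run (b :: s) <= K.
Proof. by rewrite max_run_cons geq_max => /andP. Qed.

Lemma head_run_cons_neq b s :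
  ~~ (b && (head_run (b :: s) == K)) -> head_run (b :: s) != K.
Proof. by case: b => //= _; rewrite head_run_cons eq_sym gtn_eqF. Qed.

Lemma head_run_widen_run s : max_run s <= K ->
  head_run (widen_run K s) = if head_run s == K then K.+1 else head_run s.
Proof.
elim: s => [|b s IH]; first by case: K K_gt0.
move=> /max_run_cons_leq[le_s]; have := head_run_le_max_run s.
rewrite [widen_run K _]/= !head_run_cons; case: b => /= le_hs le_h.
  case: ifP => [/eqP <-|ne]; first by rewrite !head_run_cons.
  by rewrite head_run_cons IH //; case: eqP => // eq_K; lia.
by rewrite head_run_cons eq_sym gtn_eqF.
Qed.

Lemma head_run_widen_run_cons b s : max_run (b :: s) <= K ->
  ~~ (b && (head_run (b :: s) == K)) ->
  head_run (b :: widen_run K s) = head_run (b :: s).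
Proof.
move=> /max_run_cons_leq[le_s]; rewrite !head_run_cons; case: b => //= le_h ne.
by rewrite head_run_widen_run //; case: eqP => // eq_K; lia.
Qed.

Lemma max_run_widen_run s : max_run s <= K ->
  max_run (widen_run K s) = if max_run s == K then K.+1 else max_run s.
Proof.
elim: s => [|b s IH]; first by case: K K_gt0.
move=> le_bs; have [le_s le_h] := max_run_cons_leq le_bs.
rewrite [widen_run K _]/=; case: ifP => [/andP[hb /eqP eq_h]|ne].
  have -> : max_run (b :: s) = K.
    by apply/eqP; rewrite eqn_leq le_bs -eq_h head_run_le_max_run.
  rewrite max_run_cons [head_run (true :: _)]head_run_cons eq_h eqxx; lia.
rewrite max_run_cons head_run_widen_run_cons ?ne // IH // [max_run (b :: s)]max_run_cons.
have /eqP ne_h := head_run_cons_neq (negbT ne).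
by case: eqP => ?; case: eqP => ?; lia.
Qed.

Lemma size_widen_run s : max_run s <= K ->
  size (widen_run K s) = size s + (max_run s == K).
Proof.
elim: s => [|b s IH]; first by case: K K_gt0.
move=> le_bs; have [le_s le_h] := max_run_cons_leq le_bs.
rewrite [widen_run K _]/=; case: ifP => [/andP[hb /eqP eq_h]|ne].
  have -> : max_run (b :: s) = K.
    by apply/eqP; rewrite eqn_leq le_bs -eq_h head_run_le_max_run.
  by rewrite eqxx addn1.
rewrite /= IH // max_run_cons.
have /eqP ne_h := head_run_cons_neq (negbT ne).
by case: eqP => ?; case: eqP => ? /=; lia.
Qed.

Lemma widen_runK s : max_run s <= K -> shrink_run K.+1 (widen_run K s) = s.
Proof.
elim: s => [|b s IH] // le_bs; have [le_s le_h] := max_run_cons_leq le_bs.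
rewrite [widen_run K _]/=; case: ifP => [/andP[hb /eqP eq_h]|ne] /=.
  by rewrite [head_run (true :: _)]head_run_cons eq_h eqxx.
rewrite head_run_widen_run_cons ?ne // IH //.
by case: ifP => // /andP[_ /eqP eq_h]; move: le_h; rewrite eq_h; lia.
Qed.

End WidenRun.

Definition grow_run (a r : nat) : nat := bits_val (widen_run (kappa r) (bits a r)).

Lemma size_widen_run_bits a r : r < 2 ^ a -> 0 < kappa r ->
  size (widen_run (kappa r) (bits a r)) = a.+1.
Proof. by move=> lt_r pos; rewrite size_widen_run ?max_run_bits ?eqxx ?size_bits ?addn1. Qed.

Lemma kappa_grow_run a r : r < 2 ^ a -> 0 < kappa r ->
  kappa (grow_run a r) = (kappa r).+1.
Proof.
by move=> lt_r pos; rewrite /grow_run kappa_bits_val max_run_widen_run ?max_run_bits ?eqxx.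
Qed.

Lemma grow_run_lt a r : r < 2 ^ a -> 0 < kappa r -> grow_run a r < 2 ^ a.+1.
Proof. by move=> lt_r pos; rewrite -(size_widen_run_bits lt_r pos) bits_val_lt. Qed.

Lemma grow_run_inj a r1 r2 : r1 < 2 ^ a -> r2 < 2 ^ a -> 0 < kappa r1 ->
  0 < kappa r2 -> grow_run a r1 = grow_run a r2 -> r1 = r2.
Proof.
move=> lt_r1 lt_r2 pos1 pos2 eq_g.
have eq_kappa : kappa r1 = kappa r2.
  apply: succn_inj.
  by rewrite -(kappa_grow_run lt_r1) // -(kappa_grow_run lt_r2) // eq_g.
have eq_w : widen_run (kappa r1) (bits a r1) = widen_run (kappa r2) (bits a r2).
  by rewrite -[LHS]bits_valK -[RHS]bits_valK !size_widen_run_bits //; congr bits.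
rewrite -(bitsK lt_r1) -(bitsK lt_r2) -(widen_runK pos1 (s := bits a r1)) ?max_run_bits //.
by rewrite eq_w eq_kappa widen_runK ?max_run_bits.
Qed.

Definition count_kappa_gt_parity (l : nat) (p : bool) (a : nat) : nat :=
  count_below (fun r => (l < kappa r) && (odd (kappa r) == p)) (2 ^ a).

Lemma count_kappa_gt_parity_flip l p a :
  count_kappa_gt_parity l (~~ p) a <= count_kappa_gt_parity l p a.+1.
Proof.
rewrite /count_kappa_gt_parity /count_below -size_filter.
set s := filter _ _; set P := fun r => _.
have mem_s r :
    r \in s -> [/\ r < 2 ^ a, 0 < kappa r, l < kappa r & odd (kappa r) = ~~ p].
  by rewrite mem_filter mem_iota add0n => /andP[/andP[? /eqP ?] ?]; split => //; lia.
have -> : size s = count P (map (grow_run a) s).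
  rewrite count_map -size_filter; congr size.
  apply/esym/all_filterP/allP => r /mem_s[lt_r pos lt_l odd_r].
  by rewrite /P /= kappa_grow_run //= odd_r negbK eqxx andbT ltnW.
apply: uniq_leq_count => [|_ /mapP[r /mem_s[lt_r pos _ _] ->]].
  rewrite map_inj_in_uniq ?filter_uniq ?iota_uniq // => r1 r2.
  by move=> /mem_s[? ? _ _] /mem_s[? ? _ _]; apply: grow_run_inj.
by rewrite mem_iota add0n grow_run_lt.
Qed.

Lemma count_kappa_gt_parity_large l p A0 :
  exists2 a, A0 <= a & 2 ^ a <= 8 * count_kappa_gt_parity l p a.
Proof.
have [N0 dN] := upper_density_zero_kappa_lt l.+1 (k := 2) isT.
set a := maxn A0 N0.
have le_a : N0 <= 2 ^ a by apply: leq_trans (ltnW (ltn_expl a (ltnSn 1))); lia.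
have := dN _ le_a; rewrite /count_below.
have := count_predC (fun r => l < kappa r) (iota 0 (2 ^ a)); rewrite size_iota.
have -> : count (predC (fun r => l < kappa r)) (iota 0 (2 ^ a)) =
    count (fun r => kappa r < l.+1) (iota 0 (2 ^ a)).
  by apply: eq_count => r /=; rewrite -leqNgt ltnS.
have -> : count (fun r => l < kappa r) (iota 0 (2 ^ a)) =
    count_kappa_gt_parity l p a + count_kappa_gt_parity l (~~ p) a.
  rewrite -size_filter -(count_predC (fun r => odd (kappa r) == p)) !count_filter.
  congr (_ + _); apply: eq_count => r /=.
    by rewrite andbC.
  by case: p; case: (odd _); rewrite /= ?andbT ?andbF.
have := count_kappa_gt_parity_flip l p a.
have [le_p|lt_p] := leqP (2 ^ a) (4 * count_kappa_gt_parity l p a).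
  by exists a; lia.
by exists a.+1; rewrite ?expnS; lia.
Qed.

Lemma asym_eq_refl (T : eqType) (f : nat -> T) : asym_eq f f.
Proof.
move=> k _; exists 0 => N _.
by rewrite /count_below (@eq_count _ _ pred0) ?count_pred0 ?muln0 // => n /=; rewrite eqxx.
Qed.

Lemma asym_eq_sym (T : eqType) (f g : nat -> T) : asym_eq f g -> asym_eq g f.
Proof. by apply: upper_density_zero_sub => n; rewrite eq_sym. Qed.

Lemma asym_eq_trans (T : eqType) (f g h : nat -> T) :
  asym_eq f g -> asym_eq g h -> asym_eq f h.
Proof.
move=> efg egh; apply: upper_density_zero_sub (upper_density_zero_or efg egh) => n.
by apply: contraR; rewrite negb_or !negbK => /andP[/eqP -> /eqP ->].
Qed.

Lemma automatic_asym_eq_kernel (T : eqType) k (f ft : nat -> T) :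
  0 < k -> automatic k ft -> asym_eq f ft ->
  (forall a r, r < k ^ a -> asym_eq (kernel_elt k f a r) f) ->
  exists m (g : nat -> nat -> T),
    (forall a r, r < k ^ a -> exists2 i, i < m & kernel_elt k ft a r =1 g i) /\
    forall i, asym_eq (g i) f.
Proof.
move=> k_gt0 [m [g kernel_g]] eq_f_ft kernel_f.
pose realized i := exists a r, r < k ^ a /\ kernel_elt k ft a r =1 g i.
(* Members of the family that are not kernel sequences of [ft] are replaced by [f]. *)
pose g' i := if excluded_middle_informative (realized i) then g i else f.
exists m, g'; split=> [a r lt_r|i].
  have [i [lt_i eq_i]] := kernel_g a r lt_r; exists i => // n.
  rewrite /g'; destruct (excluded_middle_informative (realized i)) as [?|not_realized].
    exact: eq_i.
  by case: not_realized; exists a, r.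
rewrite /g'; destruct (excluded_middle_informative (realized i)) as [[a [r [lt_r eq_i]]]|?].
  apply: asym_eq_trans (kernel_f a r lt_r); apply: asym_eq_sym.
  apply: upper_density_zero_sub (upper_density_zero_affine (A := k ^ a) r _ eq_f_ft).
    by move=> n; rewrite -eq_i.
  by rewrite expn_gt0 k_gt0.
exact: asym_eq_refl.
Qed.

Lemma large_class_outside_density_zero (E : pred nat) (c : nat -> bool) : upper_density_zero E ->
  exists l p, 2 ^ l <= 4 * count_below (fun n => ~~ E n && (c n == p)) (2 ^ l).
Proof.
move=> /(_ 4 isT)[l dE]; exists l.
have := dE (2 ^ l) (ltnW (ltn_expl l (ltnSn 1))); rewrite /count_below.
have := count_predC E (iota 0 (2 ^ l)); rewrite size_iota.
have -> : count (predC E) (iota 0 (2 ^ l)) =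
    count (fun n => ~~ E n && (c n == true)) (iota 0 (2 ^ l)) +
    count (fun n => ~~ E n && (c n == false)) (iota 0 (2 ^ l)).
  rewrite -size_filter -(count_predC (fun n => c n == true)) !count_filter.
  by congr (_ + _); apply: eq_count => n /=; rewrite andbC //; case: (c n).
set c_true := count (fun n => ~~ E n && (c n == true)) _.
by have [|] := leqP (2 ^ l) (4 * c_true); [exists true | exists false; lia].
Qed.

Lemma f_kappa_add_sep a n r : r < 2 ^ a -> kappa n <= kappa r ->
  f_kappa (2 ^ a.+1 * n + r) = f_kappa r.
Proof. by move=> lt_r le_n; rewrite /f_kappa kappa_add_sep // (maxn_idPl le_n). Qed.

Lemma uniform_kernel_not_asym_eq_f_kappa (ft : nat -> nat) m g :
  (forall a r, r < 2 ^ a -> exists2 i, i < m & kernel_elt 2 ft a r =1 g i) ->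
  (forall i, asym_eq (g i) f_kappa) -> ~ asym_eq f_kappa ft.
Proof.
move=> kernel_g eq_g eq_f_ft.
pose E n := has (fun i => g i n != f_kappa n) (iota 0 m).
have [l [p dense_n]] := @large_class_outside_density_zero E (fun n => odd (kappa n))
  (upper_density_zero_has (fun i _ => eq_g i)).
have [N1 dN1] := eq_f_ft 128 isT.
have [a le_a dense_r] := count_kappa_gt_parity_large l (~~ p) N1.
have mismatch :
    count_below (fun n => ~~ E n && (odd (kappa n) == p)) (2 ^ l) *
    count_kappa_gt_parity l (~~ p) a <=
    count_below (fun n => f_kappa n != ft n) (2 ^ a.+1 * 2 ^ l).
  rewrite count_below_mul count_below_sum big_distrl leq_sum // => n _ /=.
  case: (boolP (~~ E n && _)) => [/andP[good_n /eqP par_n]|_]; last by rewrite mul0n.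
  have le_a1 : 2 ^ a <= 2 ^ a.+1 by rewrite leq_pexp2l.
  rewrite mul1n (leq_trans _ (leq_count_below _ le_a1)) //.
  rewrite /count_kappa_gt_parity /count_below; apply: sub_in_count => r.
  rewrite mem_iota add0n /= => lt_r /andP[lt_l /eqP par_r].
  have [i lt_i eq_i] := kernel_g a.+1 r (leq_trans lt_r le_a1).
  have eq_gi : g i n = f_kappa n.
    by move/hasPn: good_n => /(_ i); rewrite mem_iota add0n lt_i negbK => /(_ isT)/eqP.
  have le_n : kappa n <= kappa r by have := kappa_le_log2 (ltn_ord n); lia.
  rewrite -[ft _]/(kernel_elt 2 ft a.+1 r n) eq_i eq_gi f_kappa_add_sep //.
  by rewrite /f_kappa par_r par_n; case: (p).
have le_N : N1 <= 2 ^ a.+1 * 2 ^ l.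
  apply: leq_trans le_a (ltnW (leq_trans (ltn_expl a (ltnSn 1)) _)).
  exact: leq_trans (leq_pexp2l (isT : 0 < 2) (leqnSn a)) (leq_pmulr _ (expn_gt0 2 l)).
have := dN1 _ le_N; have := leq_mul dense_n dense_r.
have : 0 < 2 ^ a * 2 ^ l by rewrite muln_gt0 !expn_gt0.
move: mismatch; rewrite expnS -mulnA mulnACA [2 ^ l * _]mulnC.
set X := 2 ^ a * 2 ^ l; set P := _ * count_kappa_gt_parity _ _ _; lia.
Qed.

Theorem proposition3p2 :
  asym_automatic 2 f_kappa /\
  ~ (exists ft : nat -> nat,
        (forall n, ft n <= 1) /\ automatic 2 ft /\ asym_eq f_kappa ft).
Proof.
split.
  exists 1, (fun _ => f_kappa) => a r lt_r.
  by exists 0; split; last exact: asym_eq_kernel_f_kappa.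
move=> [ft [_ [automatic_ft eq_f_ft]]].
have [m [g [kernel_g eq_g]]] :=
  automatic_asym_eq_kernel (isT : 0 < 2) automatic_ft eq_f_ft asym_eq_kernel_f_kappa.
exact: uniform_kernel_not_asym_eq_f_kappa kernel_g eq_g eq_f_ft.
Qed.
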